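(* Let $w\ge 3$ and $v=w-1$. Then $$\sum_{\substack{a+b=w\\ a\ge2,\ b\ge1}} T(a,b)=2\Big(\zeta(w)-\zeta(\bar w)+\zeta(\bar v,\bar1)+\zeta(\bar1,\bar v)-\zeta(\bar v,1)-\zeta(\bar1,v)\Big).$$
   Context: Multiple $T$-values: for positive integers $s_1,\dots,s_d$ with $s_1>1$, $T(s_1,\dots,s_d)=\sum_{m_1>\dots>m_d>0,\ m_j\equiv d-j+1\ (\mathrm{mod}\ 2)}\frac{2^d}{m_1^{s_1}\cdots m_d^{s_d}}$. Euler sums: $\zeta(s_1,\dots,s_d;z_1,\dots,z_d)=\sum_{n_1>\dots>n_d>0}\frac{z_1^{n_1}\cdots z_d^{n_d}}{n_1^{s_1}\cdots n_d^{s_d}}$ for $z_j\in\{\pm1\}$ (convergent iff $(s_1,z_1)\ne(1,1)$); a bar over the $j$-th argument means $z_j=-1$, no bar means $z_j=1$. *)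

From Stdlib Require Import Reals.
From Coquelicot Require Import Coquelicot.
Open Scope R_scope.

(* Convention: an infinite nested sum over n1 > n2 > 0 is the limit, as N -> oo,
   of the truncated sum over N >= n1 > n2 > 0 (outer index truncated).
   This is the standard meaning, and covers the conditionally convergent case
   s1 = 1, z1 = -1. *)

Definition euler1_partial (s : nat) (z : R) (N : nat) : R :=
  sum_n (fun k => z ^ (S k) / (INR (S k)) ^ s) N.
Definition euler1 (s : nat) (z : R) : R :=
  real (Lim_seq (fun N => euler1_partial s z N)).

Definition euler2_partial (s1 s2 : nat) (z1 z2 : R) (N : nat) : R :=
  sum_n (fun k1 =>
    sum_n (fun k2 =>
      if (k2 <? k1)%nat then
        (z1 ^ (S k1) * z2 ^ (S k2)) / ((INR (S k1)) ^ s1 * (INR (S k2)) ^ s2)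
      else 0) N) N.
Definition euler2 (s1 s2 : nat) (z1 z2 : R) : R :=
  real (Lim_seq (fun N => euler2_partial s1 s2 z1 z2 N)).

(* Depth-2 multiple T-value:
   T(s1,s2) = sum_{m1>m2>0, m1 even, m2 odd} 2^2 / (m1^s1 m2^s2)
   (m_j = d-j+1 mod 2 with d = 2: m1 = 0 mod 2, m2 = 1 mod 2). *)
Definition T2_partial (s1 s2 : nat) (N : nat) : R :=
  sum_n (fun k1 =>
    sum_n (fun k2 =>
      if ((k2 <? k1)%nat && Nat.even (S k1) && Nat.odd (S k2))%bool then
        2 ^ 2 / ((INR (S k1)) ^ s1 * (INR (S k2)) ^ s2)
      else 0) N) N.
Definition T2 (s1 s2 : nat) : R :=
  real (Lim_seq (fun N => T2_partial s1 s2 N)).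

(* Write v = w - 1, H_s(M) = sum_{j <= M} j^-s and O_s(M) for the same sum restricted to
   odd j.  Summing over a + b = w, the partial fraction identity
     sum_{a + b = w, a >= 2} m^-a j^-b = (j^-v - m^-v) / (m - j) - m^-1 j^-v
   turns the m-th row of the T-values (m even, j < m odd) into the convolution
   sum_{j + k = m} j^-v k^-1 over odd j, k, minus two boundary terms; writing
   (-1)^m = 1 - 2 [m odd] turns the Euler sums into odd harmonic sums.  Row by row, the
   truncations at M of the two sides then differ by exactly 4 (Tri(M) - O_v(M) O_1(M)),
   where Tri(M) is the part j + k <= M of the square O_v(M) O_1(M).  The missing corner is
   at most 2 H_1(M) / (M + 1) -> 0, and every series involved converges (the two with
   s_1 = 1 only conditionally), so the limits agree. *)

From Stdlib Require Import Reals Lia Lra.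
From Coquelicot Require Import Coquelicot.
Open Scope R_scope.

Definition sum1 (n : nat) (f : nat -> R) : R := sum_n_m f 1 n.

Lemma sum1_O f : sum1 0 f = 0.
Proof. exact (sum_n_m_zero f 1 0 Nat.lt_0_1). Qed.

Lemma sum1_S n f : sum1 (S n) f = sum1 n f + f (S n).
Proof. apply (sum_n_Sm f 1 n); lia. Qed.

Lemma sum1_ext n f g : (forall m, (1 <= m <= n)%nat -> f m = g m) -> sum1 n f = sum1 n g.
Proof. apply sum_n_m_ext_loc. Qed.

Lemma sum1_plus n f g : sum1 n (fun m => f m + g m) = sum1 n f + sum1 n g.
Proof. exact (sum_n_m_plus f g 1 n). Qed.

Lemma sum1_scal n c f : sum1 n (fun m => c * f m) = c * sum1 n f.
Proof. exact (sum_n_m_mult_l c f 1 n). Qed.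

Lemma sum1_minus n f g : sum1 n (fun m => f m - g m) = sum1 n f - sum1 n g.
Proof.
  induction n as [|n IH]; [rewrite !sum1_O; ring|].
  rewrite !sum1_S, IH. ring.
Qed.

Lemma sum1_zero n : sum1 n (fun _ => 0) = 0.
Proof. exact (sum_n_m_const_zero 1 n). Qed.

Lemma sum1_le n f g : (forall m, (1 <= m <= n)%nat -> f m <= g m) -> sum1 n f <= sum1 n g.
Proof.
  induction n as [|n IH]; intros Hfg.
  - rewrite !sum1_O. lra.
  - rewrite !sum1_S. apply Rplus_le_compat; [apply IH; intros|]; apply Hfg; lia.
Qed.

Lemma sum1_nonneg n f : (forall m, (1 <= m <= n)%nat -> 0 <= f m) -> 0 <= sum1 n f.
Proof. intros Hf. rewrite <- (sum1_zero n). now apply sum1_le. Qed.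

Lemma sum1_abs n f : Rabs (sum1 n f) <= sum1 n (fun m => Rabs (f m)).
Proof. exact (norm_sum_n_m f 1 n). Qed.

Lemma sum1_Sl n f : sum1 (S n) f = f 1%nat + sum1 n (fun m => f (S m)).
Proof. unfold sum1. rewrite sum_n_m_S. apply (sum_Sn_m f 1); lia. Qed.

Lemma sum1_rev n f : sum1 n (fun j => f (S n - j)%nat) = sum1 n f.
Proof.
  revert f; induction n as [|n IH]; intros f; [reflexivity|].
  now rewrite sum1_Sl, sum1_S, <- (IH f), Rplus_comm.
Qed.

Lemma sum1_telescope (u : nat -> R) n : sum1 n (fun m => u m - u (pred m)) = u n - u O.
Proof.
  induction n as [|n IH]; [rewrite sum1_O; ring|].
  rewrite sum1_S, IH. simpl. ring.
Qed.

(* Coquelicot states these in an abstract AbelianMonoid / Ring; the instances at R keep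
   the equations in R, where ring and field apply. *)
Lemma sum_n_Rext (f g : nat -> R) N :
  (forall k, (k <= N)%nat -> f k = g k) -> sum_n f N = sum_n g N.
Proof. exact (sum_n_ext_loc f g N). Qed.

Lemma sum_n_Rmult_l c (u : nat -> R) n : sum_n (fun k => c * u k) n = c * sum_n u n.
Proof. exact (sum_n_mult_l c u n). Qed.

Lemma sum_n_sum1 (f : nat -> R) N : sum_n (fun k => f (S k)) N = sum1 (S N) f.
Proof. exact (sum_n_m_S f 0 N). Qed.

Lemma sum_n_sum1_comm (F : nat -> nat -> R) K n :
  sum_n (fun k => sum1 n (F k)) K = sum1 n (fun m => sum_n (fun k => F k m) K).
Proof.
  induction n as [|n IH].
  - rewrite sum1_O. induction K as [|K IHK]; [now rewrite sum_O|].
    rewrite sum_Sn, IHK, sum1_O. apply Rplus_0_r.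
  - rewrite sum1_S, <- IH, <- (sum_n_plus (fun k => sum1 n (F k))).
    apply sum_n_ext. intros k. apply sum1_S.
Qed.

Lemma sum_n_guard (h : nat -> R) k N :
  sum_n (fun j => if (j <? k)%nat then h (S j) else 0) N = sum1 (Nat.min k (S N)) h.
Proof.
  induction N as [|N IH].
  - rewrite sum_O. destruct k; simpl.
    + symmetry. apply sum1_O.
    + rewrite Nat.min_0_r, sum1_S, sum1_O. ring.
  - rewrite sum_Sn, IH. change plus with Rplus.
    destruct (Nat.ltb_spec (S N) k).
    + rewrite !Nat.min_r by lia. now rewrite (sum1_S (S N)).
    + rewrite !Nat.min_l by lia. apply Rplus_0_r.
Qed.

Lemma sum_n_triangle (G : nat -> nat -> R) N :
  sum_n (fun k1 => sum_n (fun k2 => if (k2 <? k1)%nat then G (S k1) (S k2) else 0) N) N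
  = sum1 (S N) (fun m => sum1 (pred m) (G m)).
Proof.
  rewrite <- sum_n_sum1. apply sum_n_ext_loc. intros k Hk.
  rewrite sum_n_guard. f_equal. lia.
Qed.

(** * Parity and harmonic sums *)

Definition odd_ind (m : nat) : R := if Nat.odd m then 1 else 0.

Lemma odd_ind_cases m : odd_ind m = 0 \/ odd_ind m = 1.
Proof. unfold odd_ind; destruct (Nat.odd m); auto. Qed.

Lemma odd_ind_bounds m : 0 <= odd_ind m <= 1.
Proof. destruct (odd_ind_cases m) as [-> | ->]; lra. Qed.

Lemma pow_m1_odd_ind m : (-1) ^ m = 1 - 2 * odd_ind m.
Proof.
  induction m as [|m IH]; [unfold odd_ind; simpl; ring|].
  rewrite <- tech_pow_Rmult, IH. unfold odd_ind.
  rewrite Nat.odd_succ, <- Nat.negb_odd. destruct (Nat.odd m); simpl; ring.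
Qed.

Lemma odd_ind_sub m j : (j <= m)%nat ->
  odd_ind (m - j) = if Nat.odd m then 1 - odd_ind j else odd_ind j.
Proof.
  intros Hjm. unfold odd_ind. rewrite Nat.odd_sub by exact Hjm.
  destruct (Nat.odd m), (Nat.odd j); simpl; ring.
Qed.

Definition harm (s M : nat) : R := sum1 M (fun j => / INR j ^ s).

Definition harm_odd (s M : nat) : R := sum1 M (fun j => odd_ind j / INR j ^ s).

Lemma INR_pow_neq0 m s : (1 <= m)%nat -> INR m ^ s <> 0.
Proof. intros Hm. apply pow_nonzero, not_0_INR. lia. Qed.

Lemma inv_pow_pos m s : (1 <= m)%nat -> 0 < / INR m ^ s.
Proof. intros Hm. apply Rinv_0_lt_compat, pow_lt, lt_0_INR. lia. Qed.

Lemma inv_pow_le m s t : (1 <= m)%nat -> (t <= s)%nat -> / INR m ^ s <= / INR m ^ t.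
Proof.
  intros Hm Hts. assert (1 <= INR m) by (apply (le_INR 1); lia).
  apply Rinv_le_contravar; [apply pow_lt; lra | apply Rle_pow; assumption].
Qed.

Lemma harm_nonneg s M : 0 <= harm s M.
Proof. apply sum1_nonneg. intros m Hm. left. now apply inv_pow_pos. Qed.

Lemma odd_term_bounds s j : (1 <= j)%nat -> 0 <= odd_ind j / INR j ^ s <= / INR j ^ s.
Proof.
  intros Hj. pose proof (inv_pow_pos j s Hj). pose proof (odd_ind_bounds j).
  unfold Rdiv. split; nra.
Qed.

Lemma sum1_alternating s p : sum1 p (fun j => (-1) ^ j / INR j ^ s)
  = sum1 p (fun j => 1 ^ j / INR j ^ s) - 2 * harm_odd s p.
Proof.
  unfold harm_odd. rewrite <- sum1_scal, <- sum1_minus.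
  apply sum1_ext. intros j Hj. rewrite pow_m1_odd_ind, pow1. unfold Rdiv. ring.
Qed.

Lemma euler1_partial_sum1 s z N :
  euler1_partial s z N = sum1 (S N) (fun m => z ^ m / INR m ^ s).
Proof. apply (sum_n_sum1 (fun m => z ^ m / INR m ^ s)). Qed.

Lemma euler2_partial_sum1 s1 s2 z1 z2 N : euler2_partial s1 s2 z1 z2 N =
  sum1 (S N) (fun m => z1 ^ m / INR m ^ s1 * sum1 (pred m) (fun j => z2 ^ j / INR j ^ s2)).
Proof.
  unfold euler2_partial.
  rewrite (sum_n_triangle (fun m j => (z1 ^ m * z2 ^ j) / (INR m ^ s1 * INR j ^ s2))).
  apply sum1_ext. intros m Hm. rewrite <- sum1_scal. apply sum1_ext. intros j Hj.
  field. split; apply INR_pow_neq0; lia.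
Qed.

Lemma T2_partial_sum1 a b N : T2_partial a b N =
  sum1 (S N) (fun m => 4 * (1 - odd_ind m) / INR m ^ a * harm_odd b (pred m)).
Proof.
  set (G m j := 4 * (1 - odd_ind m) / INR m ^ a * (odd_ind j / INR j ^ b)).
  assert (HG : forall k1 k2 : nat,
    (if ((k2 <? k1) && Nat.even (S k1) && Nat.odd (S k2))%bool
     then 2 ^ 2 / (INR (S k1) ^ a * INR (S k2) ^ b) else 0)
    = if (k2 <? k1)%nat then G (S k1) (S k2) else 0).
  { intros k1 k2. unfold G, odd_ind. rewrite <- Nat.negb_odd.
    destruct (k2 <? k1)%nat, (Nat.odd (S k1)), (Nat.odd (S k2)); cbv [negb andb];
      unfold Rdiv; rewrite ?Rinv_mult; ring. }
  unfold T2_partial.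
  rewrite (sum_n_ext _ (fun k1 => sum_n (fun k2 =>
    if (k2 <? k1)%nat then G (S k1) (S k2) else 0) N)).
  2:{ intros k1. apply sum_n_ext. intros k2. apply HG. }
  rewrite sum_n_triangle. apply sum1_ext. intros m Hm.
  unfold harm_odd. rewrite <- sum1_scal. reflexivity.
Qed.

(** * The partial sums identity *)

Lemma geometric_sum_mul x y n :
  (y - x) * sum_n (fun k => x ^ (k + 2) * y ^ (S n - k)) n = x ^ 2 * y ^ (n + 2) - x ^ (n + 3) * y.
Proof.
  induction n as [|n IH]; [rewrite sum_O; simpl; ring|].
  rewrite sum_Sn. change plus with Rplus.
  rewrite (sum_n_Rext _ (fun k => y * (x ^ (k + 2) * y ^ (S n - k)))).
  2:{ intros k Hk. replace (S (S n) - k)%nat with (S (S n - k)) by lia. simpl. ring. }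
  rewrite sum_n_Rmult_l.
  rewrite Rmult_plus_distr_l, <- Rmult_assoc, (Rmult_comm _ y), Rmult_assoc, IH.
  replace (S (S n) - S n)%nat with 1%nat by lia.
  replace (S n + 2)%nat with (S (n + 2)) by lia.
  replace (S n + 3)%nat with (S (S (n + 2))) by lia.
  replace (n + 3)%nat with (S (n + 2)) by lia.
  simpl. ring.
Qed.

Lemma partial_fraction M J n : 0 < J < M ->
  sum_n (fun k => (/ M) ^ (k + 2) * (/ J) ^ (S n - k)) n
  = ((/ J) ^ (n + 2) - (/ M) ^ (n + 2)) / (M - J) - / M * (/ J) ^ (n + 2).
Proof.
  intros [HJ HJM].
  assert (HMJ : M - J = (/ J - / M) / (/ M * / J)) by (field; lra).
  assert (Hxy : / M < / J) by (apply Rinv_lt_contravar; nra).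
  assert (Hx : 0 < / M) by (apply Rinv_0_lt_compat; lra).
  rewrite HMJ. set (x := / M) in *. set (y := / J) in *.
  apply (Rmult_eq_reg_l (y - x)); [|lra].
  rewrite geometric_sum_mul.
  replace (n + 3)%nat with (S (n + 2)) by lia. simpl pow.
  field. lra.
Qed.

Definition odd_conv (v m : nat) : R :=
  sum1 (pred m) (fun j => odd_ind j / INR j ^ v * (odd_ind (m - j) / INR (m - j))).

Definition odd_triangle (v M : nat) : R :=
  sum1 M (fun j => odd_ind j / INR j ^ v * harm_odd 1 (M - j)).

Definition odd_square (v M : nat) : R := harm_odd v M * harm_odd 1 M.

Definition odd_border (v m : nat) : R :=
  harm_odd 1 (pred m) / INR m ^ v + harm_odd v (pred m) / INR m.

Lemma odd_triangle_S v M : odd_triangle v (S M) - odd_triangle v M = odd_conv v (S M).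
Proof.
  unfold odd_triangle, odd_conv. rewrite sum1_S, Nat.sub_diag.
  unfold harm_odd at 2. rewrite sum1_O, Rmult_0_r, Rplus_0_r, <- sum1_minus.
  apply sum1_ext. intros j Hj.
  replace (S M - j)%nat with (S (M - j)) by lia.
  unfold harm_odd. rewrite sum1_S, pow_1. simpl pred. ring.
Qed.

Lemma odd_square_S v m : (1 <= m)%nat ->
  odd_square v m - odd_square v (pred m) = odd_ind m * (/ INR m ^ S v + odd_border v m).
Proof.
  intros Hm. destruct m as [|m]; [lia|]. unfold odd_square, odd_border, harm_odd.
  simpl pred. rewrite !sum1_S.
  assert (Hpos : INR (S m) <> 0) by (apply not_0_INR; lia).
  assert (Hposv : INR (S m) ^ v <> 0) by (apply pow_nonzero; exact Hpos).
  rewrite <- (tech_pow_Rmult _ v).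
  destruct (odd_ind_cases (S m)) as [-> | ->]; field; auto.
Qed.

Lemma odd_conv_odd v m : Nat.odd m = true -> odd_conv v m = 0.
Proof.
  intros Hodd. unfold odd_conv. rewrite <- (sum1_zero (pred m)).
  apply sum1_ext. intros j Hj. rewrite odd_ind_sub, Hodd by lia.
  destruct (odd_ind_cases j) as [-> | ->]; unfold Rdiv; ring.
Qed.

Lemma harm_odd_rev_even m : (1 <= m)%nat -> Nat.odd m = false ->
  sum1 (pred m) (fun j => odd_ind j / INR (m - j)) = harm_odd 1 (pred m).
Proof.
  intros Hm Hodd. unfold harm_odd.
  rewrite <- (sum1_rev (pred m) (fun j => odd_ind j / INR j ^ 1)).
  apply sum1_ext. intros j Hj.
  replace (S (pred m) - j)%nat with (m - j)%nat by lia.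
  now rewrite odd_ind_sub, Hodd, pow_1 by lia.
Qed.

Lemma odd_row_even n m : (1 <= m)%nat -> Nat.odd m = false ->
  sum1 (pred m) (fun j => odd_ind j *
    sum_n (fun k => (/ INR m) ^ (k + 2) * (/ INR j) ^ (S n - k)) n)
  = odd_conv (n + 2) m - odd_border (n + 2) m.
Proof.
  intros Hm Hodd.
  rewrite (sum1_ext _ _ (fun j => odd_ind j / INR j ^ (n + 2) * (odd_ind (m - j) / INR (m - j))
    - / INR m ^ (n + 2) * (odd_ind j / INR (m - j)) - / INR m * (odd_ind j / INR j ^ (n + 2)))).
  - rewrite !sum1_minus, !sum1_scal, harm_odd_rev_even by assumption.
    unfold odd_conv, odd_border, harm_odd. unfold Rdiv. ring.
  - intros j Hj.
    assert (Hjm : 0 < INR j < INR m) by (split; [apply lt_0_INR | apply lt_INR]; lia).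
    rewrite partial_fraction, odd_ind_sub, Hodd, minus_INR by (assumption || lia).
    rewrite !pow_inv.
    assert (Hjv : INR j ^ (n + 2) <> 0) by (apply pow_nonzero; lra).
    assert (Hmv : INR m ^ (n + 2) <> 0) by (apply pow_nonzero; lra).
    destruct (odd_ind_cases j) as [-> | ->]; field; repeat split; lra.
Qed.

Lemma T2_row n m : (1 <= m)%nat ->
  (* the cast puts the equation in R rather than in Coquelicot's AbelianMonoid carrier *)
  (sum_n (fun k => 4 * (1 - odd_ind m) / INR m ^ (k + 2) * harm_odd (n + 3 - (k + 2)) (pred m)) n
   : R) = 4 * odd_conv (n + 2) m - 4 * (1 - odd_ind m) * odd_border (n + 2) m.
Proof.
  intros Hm.
  rewrite (sum_n_Rext _ (fun k => sum1 (pred m) (fun j => 4 * (1 - odd_ind m) *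
    (odd_ind j * ((/ INR m) ^ (k + 2) * (/ INR j) ^ (S n - k)))))).
  2:{ intros k Hk. unfold harm_odd. rewrite <- sum1_scal. apply sum1_ext. intros j Hj.
      replace (n + 3 - (k + 2))%nat with (S n - k)%nat by lia.
      rewrite !pow_inv. unfold Rdiv. ring. }
  rewrite sum_n_sum1_comm.
  rewrite (sum1_ext _ _ (fun j => 4 * (1 - odd_ind m) *
    (odd_ind j * sum_n (fun k => (/ INR m) ^ (k + 2) * (/ INR j) ^ (S n - k)) n))).
  2:{ intros j Hj. now rewrite !sum_n_Rmult_l. }
  rewrite sum1_scal.
  destruct (Nat.odd m) eqn:Hodd.
  - rewrite odd_conv_odd by exact Hodd. unfold odd_ind. rewrite Hodd. ring.
  - rewrite odd_row_even by assumption. unfold odd_ind. rewrite Hodd. ring.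
Qed.

Lemma euler_row v m :
  1 ^ m / INR m ^ S v - (-1) ^ m / INR m ^ S v
  + (-1) ^ m / INR m ^ v * sum1 (pred m) (fun j => (-1) ^ j / INR j ^ 1)
  + (-1) ^ m / INR m ^ 1 * sum1 (pred m) (fun j => (-1) ^ j / INR j ^ v)
  - (-1) ^ m / INR m ^ v * sum1 (pred m) (fun j => 1 ^ j / INR j ^ 1)
  - (-1) ^ m / INR m ^ 1 * sum1 (pred m) (fun j => 1 ^ j / INR j ^ v)
  = 2 * odd_ind m / INR m ^ S v + 2 * (2 * odd_ind m - 1) * odd_border v m.
Proof.
  rewrite !sum1_alternating, pow1, pow_m1_odd_ind, pow_1.
  unfold odd_border, harm_odd. unfold Rdiv. ring.
Qed.

Definition T2_sum_partial (n N : nat) : R :=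
  sum_n (fun k => T2_partial (k + 2) (n + 3 - (k + 2)) N) n.

Definition euler_comb_partial (n N : nat) : R :=
  2 * (euler1_partial (n + 3) 1 N - euler1_partial (n + 3) (-1) N
      + euler2_partial (n + 2) 1 (-1) (-1) N + euler2_partial 1 (n + 2) (-1) (-1) N
      - euler2_partial (n + 2) 1 (-1) 1 N - euler2_partial 1 (n + 2) (-1) 1 N).

Lemma partial_sums_identity n N : T2_sum_partial n N - euler_comb_partial n N
  = 4 * (odd_triangle (n + 2) (S N) - odd_square (n + 2) (S N)).
Proof.
  unfold T2_sum_partial, euler_comb_partial.
  set (T2row m := sum_n (fun k => 4 * (1 - odd_ind m) / INR m ^ (k + 2)
                                  * harm_odd (n + 3 - (k + 2)) (pred m)) n : R).
  set (Erow m := 1 ^ m / INR m ^ S (n + 2) - (-1) ^ m / INR m ^ S (n + 2)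
    + (-1) ^ m / INR m ^ (n + 2) * sum1 (pred m) (fun j => (-1) ^ j / INR j ^ 1)
    + (-1) ^ m / INR m ^ 1 * sum1 (pred m) (fun j => (-1) ^ j / INR j ^ (n + 2))
    - (-1) ^ m / INR m ^ (n + 2) * sum1 (pred m) (fun j => 1 ^ j / INR j ^ 1)
    - (-1) ^ m / INR m ^ 1 * sum1 (pred m) (fun j => 1 ^ j / INR j ^ (n + 2))).
  assert (HT2 : sum_n (fun k => T2_partial (k + 2) (n + 3 - (k + 2)) N) n = sum1 (S N) T2row).
  { rewrite (sum_n_Rext _ _ _ (fun k _ => T2_partial_sum1 _ _ N)).
    apply sum_n_sum1_comm. }
  rewrite HT2, (Nat.add_succ_r n 2).
  assert (HE : euler1_partial (S (n + 2)) 1 N - euler1_partial (S (n + 2)) (-1) N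
      + euler2_partial (n + 2) 1 (-1) (-1) N + euler2_partial 1 (n + 2) (-1) (-1) N
      - euler2_partial (n + 2) 1 (-1) 1 N - euler2_partial 1 (n + 2) (-1) 1 N
      = sum1 (S N) Erow).
  { unfold Erow. rewrite !sum1_minus, !sum1_plus, !sum1_minus.
    now rewrite !euler1_partial_sum1, !euler2_partial_sum1. }
  rewrite HE, <- sum1_scal, <- sum1_minus.
  rewrite (sum1_ext _ _ (fun m => 4 * (odd_triangle (n + 2) m - odd_triangle (n + 2) (pred m))
                                 - 4 * (odd_square (n + 2) m - odd_square (n + 2) (pred m)))).
  - rewrite sum1_minus, !sum1_scal, !sum1_telescope.
    unfold odd_triangle, odd_square, harm_odd. rewrite !sum1_O. ring.
  - intros m Hm. destruct m as [|m]; [lia|].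
    rewrite odd_triangle_S, odd_square_S by lia.
    unfold T2row, Erow. rewrite T2_row, euler_row by lia. simpl pred. unfold Rdiv. ring.
Qed.

(** * The square-triangle gap *)

Lemma harm_odd_incr_bounds n d :
  0 <= harm_odd 1 (n + d) - harm_odd 1 n <= INR d / INR (S n).
Proof.
  induction d as [|d IH].
  - rewrite Nat.add_0_r. unfold Rdiv. simpl INR. lra.
  - rewrite Nat.add_succ_r.
    assert (HS : harm_odd 1 (S (n + d))
                 = harm_odd 1 (n + d) + odd_ind (S (n + d)) / INR (S (n + d)) ^ 1)
      by apply sum1_S.
    assert (Hle : / INR (S (n + d)) ^ 1 <= / INR (S n)).
    { rewrite pow_1. apply Rinv_le_contravar; [apply lt_0_INR; lia | apply le_INR; lia]. }
    pose proof (odd_term_bounds 1 (S (n + d)) ltac:(lia)).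
    rewrite HS, (S_INR d). unfold Rdiv in *. rewrite Rmult_plus_distr_r, Rmult_1_l. lra.
Qed.

Lemma odd_square_gap_sum1 v M : odd_square v M - odd_triangle v M
  = sum1 M (fun j => odd_ind j / INR j ^ v * (harm_odd 1 M - harm_odd 1 (M - j))).
Proof.
  unfold odd_square, odd_triangle. unfold harm_odd at 1.
  rewrite Rmult_comm, <- sum1_scal, <- sum1_minus.
  apply sum1_ext. intros j Hj. ring.
Qed.

Lemma odd_square_gap_term_bounds v M j : (2 <= v)%nat -> (1 <= j <= M)%nat ->
  0 <= odd_ind j / INR j ^ v * (harm_odd 1 M - harm_odd 1 (M - j))
    <= / INR (S M) * (/ INR j + / INR (S M - j)).
Proof.
  intros Hv Hj.
  pose proof (harm_odd_incr_bounds (M - j) j) as Hgap.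
  replace (M - j + j)%nat with M in Hgap by lia.
  destruct (odd_term_bounds v j ltac:(lia)) as [Ha0 Ha1].
  pose proof (inv_pow_le j v 2 ltac:(lia) Hv) as Hv2.
  split; [apply Rmult_le_pos; lra|].
  apply Rle_trans with (/ INR j ^ 2 * (INR j / INR (S (M - j)))).
  - apply Rmult_le_compat; lra.
  - replace (S M - j)%nat with (S (M - j)) by lia.
    assert (Hx : 0 < INR j) by (apply lt_0_INR; lia).
    assert (Hy : 0 < INR (S (M - j))) by (apply lt_0_INR; lia).
    replace (INR (S M)) with (INR j + INR (S (M - j))) by (rewrite <- plus_INR; f_equal; lia).
    right. field. lra.
Qed.

Lemma odd_square_gap_bounds v M : (2 <= v)%nat ->
  0 <= odd_square v M - odd_triangle v M <= 2 * harm 1 M / INR (S M).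
Proof.
  intros Hv. rewrite odd_square_gap_sum1. split.
  - apply sum1_nonneg. intros j Hj. apply (odd_square_gap_term_bounds v M j Hv Hj).
  - eapply Rle_trans.
    { apply sum1_le. intros j Hj. apply (odd_square_gap_term_bounds v M j Hv Hj). }
    rewrite sum1_scal, sum1_plus, (sum1_rev M (fun j => / INR j)).
    unfold harm. rewrite (sum1_ext M (fun j => / INR j ^ 1) (fun j => / INR j))
      by (intros; now rewrite pow_1).
    right. field. apply not_0_INR. lia.
Qed.

Lemma inv_INR_S_cvg0 : Un_cv (fun k => / INR (S k)) 0.
Proof.
  apply is_lim_seq_Reals.
  pose proof (is_lim_seq_inv INR p_infty is_lim_seq_INR) as H.
  apply (is_lim_seq_incr_1 (fun n => / INR n)), H. discriminate.
Qed.

Lemma harm_mean_cvg0 : is_lim_seq (fun N => harm 1 (S N) / INR (S N)) 0.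
Proof.
  pose proof (Cesaro_1 _ 0 inv_INR_S_cvg0) as C.
  apply is_lim_seq_Reals, is_lim_seq_incr_1 in C.
  eapply is_lim_seq_ext; [|exact C]. intros N. cbv beta. simpl pred.
  rewrite <- sum_n_Reals, (sum_n_sum1 (fun j => / INR j)).
  unfold harm. f_equal. apply sum1_ext. intros; now rewrite pow_1.
Qed.

Lemma odd_square_gap_cvg0 v : (2 <= v)%nat ->
  is_lim_seq (fun N => odd_square v (S N) - odd_triangle v (S N)) 0.
Proof.
  intros Hv.
  apply is_lim_seq_le_le with (u := fun _ => 0) (w := fun N => 2 * (harm 1 (S N) / INR (S N))).
  - intros N. destruct (odd_square_gap_bounds v (S N) Hv) as [Hlo Hhi].
    split; [exact Hlo|]. eapply Rle_trans; [exact Hhi|].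
    pose proof (harm_nonneg 1 (S N)).
    assert (Hinv : / INR (S (S N)) <= / INR (S N))
      by (apply Rinv_le_contravar; [apply lt_0_INR; lia | apply le_INR; lia]).
    unfold Rdiv. rewrite Rmult_assoc. apply Rmult_le_compat_l; [lra|].
    now apply Rmult_le_compat_l.
  - apply is_lim_seq_const.
  - replace (Finite 0) with (Rbar_mult 2 0) by (simpl; f_equal; ring).
    apply is_lim_seq_scal_l, harm_mean_cvg0.
Qed.

(** * Convergence *)

Lemma harm2_bound M : harm 2 M <= 2 - 2 / INR (S M).
Proof.
  induction M as [|M IH]; [unfold harm; rewrite sum1_O; simpl; lra|].
  unfold harm in *. rewrite sum1_S, (S_INR (S M)).
  set (x := INR (S M)) in *.
  assert (Hx : 1 <= x) by (apply (le_INR 1); lia).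
  assert (Hstep : / x ^ 2 <= 2 / x - 2 / (x + 1)).
  { apply (Rmult_le_reg_r (x ^ 2 * (x + 1))); [nra|].
    field_simplify; [nra | lra..]. }
  lra.
Qed.

Lemma harm2_le2 M : harm 2 M <= 2.
Proof.
  pose proof (harm2_bound M).
  assert (0 < 2 / INR (S M)) by (apply Rdiv_lt_0_compat; [lra | apply lt_0_INR; lia]).
  lra.
Qed.

(* For M = 0 the second term is 0 / 0, which is 0 in Rocq. *)
Lemma harm_weighted_bound M :
  sum1 M (fun m => harm 1 (pred m) / INR m ^ 2) + harm 1 M / INR M <= harm 2 M.
Proof.
  induction M as [|M IH]; [unfold harm; rewrite !sum1_O; unfold Rdiv; lra|].
  assert (HS1 : harm 1 (S M) = harm 1 M + / INR (S M)) by (unfold harm; now rewrite sum1_S, pow_1).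
  assert (HS2 : harm 2 (S M) = harm 2 M + / INR (S M) ^ 2) by apply sum1_S.
  rewrite (sum1_S M (fun m => harm 1 (pred m) / INR m ^ 2)), HS1, HS2. simpl pred.
  destruct M as [|M].
  - unfold harm. rewrite !sum1_O. simpl. lra.
  - pose proof (harm_nonneg 1 (S M)) as Hh.
    set (h := harm 1 (S M)) in *. rewrite (S_INR (S M)). set (x := INR (S M)) in *.
    assert (Hx : 1 <= x) by (apply (le_INR 1); lia).
    assert (Hstep : h / (x + 1) ^ 2 + h / (x + 1) <= h / x).
    { apply (Rmult_le_reg_r (x * (x + 1) ^ 2)); [nra|].
      field_simplify; [nra | lra..]. }
    assert (Hlast : (h + / (x + 1)) / (x + 1) = h / (x + 1) + / (x + 1) ^ 2) by (field; lra).
    lra.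
Qed.

Lemma harm_weighted_le2 M : sum1 M (fun m => harm 1 (pred m) / INR m ^ 2) <= 2.
Proof.
  pose proof (harm_weighted_bound M). pose proof (harm2_le2 M).
  assert (0 <= harm 1 M / INR M).
  { destruct M as [|M]; [unfold Rdiv; simpl; rewrite Rinv_0; lra|].
    apply Rdiv_le_0_compat; [apply harm_nonneg | apply lt_0_INR; lia]. }
  lra.
Qed.

Lemma sum1_abs_bounded_cvg (u g : nat -> R) B : (forall N, u N = sum1 (S N) g) ->
  (forall M, sum1 M (fun m => Rabs (g m)) <= B) -> ex_finite_lim_seq u.
Proof.
  intros Hu HB.
  assert (Habs : ex_series (fun k => Rabs (g (S k)))).
  { apply (ex_finite_lim_seq_incr _ B).
    - intros n. rewrite sum_Sn. pose proof (Rabs_pos (g (S (S n)))). change plus with Rplus. lra.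
    - intros n. rewrite (sum_n_sum1 (fun m => Rabs (g m))). apply HB. }
  destruct (ex_series_Rabs _ Habs) as [l Hl]. exists l.
  eapply is_lim_seq_ext; [|exact Hl]. intros N. rewrite Hu. apply (sum_n_sum1 g).
Qed.

Lemma Rabs_unit_pow_div z m s : Rabs z = 1 -> (1 <= m)%nat ->
  Rabs (z ^ m / INR m ^ s) = / INR m ^ s.
Proof.
  intros Hz Hm. unfold Rdiv. rewrite Rabs_mult, <- RPow_abs, Hz, pow1, Rmult_1_l.
  apply Rabs_right. left. now apply inv_pow_pos.
Qed.

Lemma Rabs_m1 : Rabs (-1) = 1.
Proof. rewrite Rabs_left; lra. Qed.

Lemma euler1_partial_cvg s z : (2 <= s)%nat -> Rabs z = 1 ->
  ex_finite_lim_seq (euler1_partial s z).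
Proof.
  intros Hs Hz.
  apply (sum1_abs_bounded_cvg _ _ 2 (euler1_partial_sum1 s z)). intros M.
  eapply Rle_trans; [|apply (harm2_le2 M)]. apply sum1_le. intros m Hm.
  rewrite Rabs_unit_pow_div by (assumption || lia). apply inv_pow_le; lia.
Qed.

Lemma sum1_unit_abs_le_harm z s p : Rabs z = 1 -> (1 <= s)%nat ->
  Rabs (sum1 p (fun j => z ^ j / INR j ^ s)) <= harm 1 p.
Proof.
  intros Hz Hs. eapply Rle_trans; [apply sum1_abs|]. apply sum1_le. intros j Hj.
  rewrite Rabs_unit_pow_div by (assumption || lia). apply inv_pow_le; lia.
Qed.

Lemma euler2_partial_cvg s1 s2 z1 z2 : (2 <= s1)%nat -> (1 <= s2)%nat ->
  Rabs z1 = 1 -> Rabs z2 = 1 -> ex_finite_lim_seq (euler2_partial s1 s2 z1 z2).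
Proof.
  intros Hs1 Hs2 Hz1 Hz2.
  apply (sum1_abs_bounded_cvg _ _ 2 (euler2_partial_sum1 s1 s2 z1 z2)). intros M.
  eapply Rle_trans; [|apply (harm_weighted_le2 M)]. apply sum1_le. intros m Hm.
  rewrite Rabs_mult, Rabs_unit_pow_div by (assumption || lia).
  rewrite Rmult_comm. unfold Rdiv. apply Rmult_le_compat.
  - apply Rabs_pos.
  - left. now apply inv_pow_pos.
  - now apply sum1_unit_abs_le_harm.
  - apply inv_pow_le; lia.
Qed.

Lemma T2_partial_cvg a b : (2 <= a)%nat -> (1 <= b)%nat -> ex_finite_lim_seq (T2_partial a b).
Proof.
  intros Ha Hb.
  apply (sum1_abs_bounded_cvg _ _ 8 (T2_partial_sum1 a b)). intros M.
  apply Rle_trans with (4 * sum1 M (fun m => harm 1 (pred m) / INR m ^ 2));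
    [|pose proof (harm_weighted_le2 M); lra].
  rewrite <- sum1_scal. apply sum1_le. intros m Hm.
  assert (Hodd : 0 <= harm_odd b (pred m) <= harm 1 (pred m)).
  { split; [apply sum1_nonneg | apply sum1_le]; intros j Hj;
      pose proof (odd_term_bounds b j ltac:(lia)); pose proof (inv_pow_le j b 1 ltac:(lia) Hb);
      lra. }
  pose proof (odd_ind_bounds m). pose proof (inv_pow_pos m a ltac:(lia)).
  pose proof (inv_pow_le m a 2 ltac:(lia) Ha).
  rewrite Rabs_right.
  - unfold Rdiv. rewrite !Rmult_assoc. apply Rmult_le_compat_l; [lra|].
    assert (0 <= / INR m ^ a * harm_odd b (pred m)) by (apply Rmult_le_pos; lra).
    apply Rle_trans with (harm_odd b (pred m) * / INR m ^ a); [nra|].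
    apply Rmult_le_compat; lra.
  - unfold Rdiv. apply Rle_ge, Rmult_le_pos; [|lra]. nra.
Qed.

Lemma sum1_tail_bound (f : nat -> R) n k : (1 <= n)%nat ->
  (forall j, (1 <= j)%nat -> Rabs (f j) <= / INR j ^ 2) ->
  Rabs (sum1 (n + k) f - sum1 n f) <= / INR n - / INR (n + k).
Proof.
  intros Hn Hf. induction k as [|k IH].
  - rewrite Nat.add_0_r, Rminus_diag, Rabs_R0. lra.
  - rewrite Nat.add_succ_r, sum1_S, S_INR.
    replace (sum1 (n + k) f + f (S (n + k)) - sum1 n f)
      with ((sum1 (n + k) f - sum1 n f) + f (S (n + k))) by ring.
    eapply Rle_trans; [apply Rabs_triang|].
    pose proof (Hf (S (n + k)) ltac:(lia)) as Hterm. rewrite S_INR in Hterm.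
    set (y := INR (n + k)) in *.
    assert (Hy : 1 <= y) by (apply (le_INR 1); lia).
    assert (/ (y + 1) ^ 2 <= / y - / (y + 1)).
    { apply (Rmult_le_reg_r (y * (y + 1) ^ 2)); [nra|].
      field_simplify; [nra | lra..]. }
    lra.
Qed.

Lemma series_tail_bound (f : nat -> R) (b : R) n : (1 <= n)%nat ->
  (forall j, (1 <= j)%nat -> Rabs (f j) <= / INR j ^ 2) ->
  is_lim_seq (fun p => sum1 p f) b -> Rabs (b - sum1 n f) <= / INR n.
Proof.
  intros Hn Hf Hb.
  assert (Hlim : is_lim_seq (fun k => Rabs (sum1 (k + n) f - sum1 n f)) (Rabs (b - sum1 n f))).
  { apply (is_lim_seq_abs _ (b - sum1 n f)), is_lim_seq_minus'.
    - now apply (is_lim_seq_incr_n (fun p => sum1 p f) n b).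
    - apply is_lim_seq_const. }
  assert (Hbound : forall k, Rabs (sum1 (k + n) f - sum1 n f) <= / INR n).
  { intros k. rewrite Nat.add_comm. eapply Rle_trans; [now apply sum1_tail_bound|].
    assert (0 < / INR (n + k)) by (apply Rinv_0_lt_compat, lt_0_INR; lia).
    lra. }
  exact (is_lim_seq_le _ _ _ _ Hbound Hlim (is_lim_seq_const (/ INR n))).
Qed.

Lemma alternating_harmonic_cvg :
  ex_finite_lim_seq (fun N => sum1 (S N) (fun m => (-1) ^ m / INR m ^ 1)).
Proof.
  assert (Hdecr : Un_decreasing (fun k => / INR (S k))).
  { intros k. apply Rinv_le_contravar; [apply lt_0_INR; lia | apply le_INR; lia]. }
  destruct (alternated_series _ Hdecr inv_INR_S_cvg0) as [l Hl].
  apply is_lim_seq_Reals, (is_lim_seq_scal_l _ (-1)) in Hl.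
  exists (-1 * l). eapply is_lim_seq_ext; [|exact Hl]. intros N. cbv beta.
  rewrite <- sum_n_Reals, <- sum_n_Rmult_l, <- (sum_n_sum1 (fun m => (-1) ^ m / INR m ^ 1)).
  apply sum_n_Rext. intros k _. unfold tg_alt. rewrite pow_1, <- tech_pow_Rmult.
  unfold Rdiv. ring.
Qed.

Lemma euler2_alt_partial_cvg v z : (2 <= v)%nat -> Rabs z = 1 ->
  ex_finite_lim_seq (euler2_partial 1 v (-1) z).
Proof.
  intros Hv Hz.
  set (B p := sum1 p (fun j => z ^ j / INR j ^ v)).
  destruct (euler1_partial_cvg v z Hv Hz) as [b Hb].
  assert (HB : is_lim_seq B b).
  { apply is_lim_seq_incr_1. eapply is_lim_seq_ext; [|exact Hb].
    intros N. apply euler1_partial_sum1. }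
  assert (Htail : forall p, (1 <= p)%nat -> Rabs (b - B p) <= / INR p).
  { intros p Hp. apply (series_tail_bound _ _ _ Hp); [|exact HB].
    intros j Hj. rewrite Rabs_unit_pow_div by assumption. apply inv_pow_le; lia. }
  (* B (m - 1) = b + (B (m - 1) - b): the first part gives b times the alternating harmonic
     series, the second is absolutely convergent since |B (m - 1) - b| <= 1 / (m - 1). *)
  destruct alternating_harmonic_cvg as [a Ha].
  assert (Hrem : ex_finite_lim_seq (fun N =>
    sum1 (S N) (fun m => (-1) ^ m / INR m ^ 1 * (B (pred m) - b)))).
  { apply (sum1_abs_bounded_cvg _ _ ((Rabs b + 2) * 2) (fun N => eq_refl)). intros M.
    apply Rle_trans with ((Rabs b + 2) * harm 2 M);
      [|apply Rmult_le_compat_l; [pose proof (Rabs_pos b); lra | apply harm2_le2]].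
    unfold harm. rewrite <- sum1_scal. apply sum1_le. intros m Hm.
    rewrite Rabs_mult, Rabs_unit_pow_div, Rabs_minus_sym, pow_1 by (apply Rabs_m1 || lia).
    assert (Hb0 : 0 <= Rabs b) by apply Rabs_pos.
    destruct (Nat.eq_dec m 1) as [->|Hm1].
    - unfold B. simpl pred. rewrite sum1_O, Rminus_0_r. simpl. rewrite !Rmult_1_r, Rinv_1. lra.
    - pose proof (Htail (pred m) ltac:(lia)) as Hp.
      assert (Hpred : INR (pred m) = INR m - 1)
        by (rewrite <- Nat.sub_1_r, minus_INR by lia; reflexivity).
      rewrite Hpred in Hp.
      assert (Hm2 : 2 <= INR m) by (apply (le_INR 2); lia).
      assert (Hm3 : / INR m * / (INR m - 1) <= 2 * / INR m ^ 2).
      { apply (Rmult_le_reg_r (INR m ^ 2 * (INR m - 1))); [nra|].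
        field_simplify; [nra | lra..]. }
      assert (0 < / INR m) by (apply Rinv_0_lt_compat; lra).
      apply Rle_trans with (/ INR m * / (INR m - 1)); [apply Rmult_le_compat_l; lra|].
      assert (0 < / INR m ^ 2) by (apply Rinv_0_lt_compat, pow_lt; lra).
      nra. }
  exists (b * a + real (Lim_seq (fun N =>
    sum1 (S N) (fun m => (-1) ^ m / INR m ^ 1 * (B (pred m) - b))))).
  eapply is_lim_seq_ext;
    [|apply is_lim_seq_plus'; [apply (is_lim_seq_scal_l _ b a Ha) | now apply Lim_seq_correct']].
  intros N. rewrite euler2_partial_sum1, <- sum1_scal, <- sum1_plus.
  apply sum1_ext. intros m Hm. fold (B (pred m)). ring.
Qed.

Lemma is_lim_seq_sum_n (u : nat -> nat -> R) (l : nat -> R) K :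
  (forall k, (k <= K)%nat -> is_lim_seq (u k) (l k)) ->
  is_lim_seq (fun N => sum_n (fun k => u k N) K) (sum_n l K).
Proof.
  induction K as [|K IH]; intros Hu.
  - rewrite sum_O. apply (is_lim_seq_ext (u O)); [intros N; now rewrite sum_O | apply Hu; lia].
  - rewrite sum_Sn. apply (is_lim_seq_ext (fun N => sum_n (fun k => u k N) K + u (S K) N)).
    + intros N. now rewrite sum_Sn.
    + apply is_lim_seq_plus'; [apply IH; intros k Hk|]; apply Hu; lia.
Qed.

Lemma T2_sum_partial_cvg n :
  is_lim_seq (T2_sum_partial n) (sum_n (fun k => T2 (k + 2) (n + 3 - (k + 2))) n).
Proof.
  apply is_lim_seq_sum_n. intros k Hk. apply Lim_seq_correct', T2_partial_cvg; lia.
Qed.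

Lemma euler_comb_partial_cvg n : is_lim_seq (euler_comb_partial n)
  (2 * (euler1 (n + 3) 1 - euler1 (n + 3) (-1)
      + euler2 (n + 2) 1 (-1) (-1) + euler2 1 (n + 2) (-1) (-1)
      - euler2 (n + 2) 1 (-1) 1 - euler2 1 (n + 2) (-1) 1)).
Proof.
  pose proof Rabs_m1. pose proof Rabs_R1.
  apply is_lim_seq_mult'; [apply is_lim_seq_const|].
  repeat apply is_lim_seq_minus' || apply is_lim_seq_plus'; apply Lim_seq_correct'.
  all: first [ apply euler1_partial_cvg; solve [assumption | lia]
             | apply euler2_partial_cvg; solve [assumption | lia]
             | apply euler2_alt_partial_cvg; solve [assumption | lia] ].
Qed.

Theorem corollary4p3 (w : nat) (hw : (3 <= w)%nat) :
  let v := (w - 1)%nat in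
  sum_n (fun k => T2 (k + 2) (w - (k + 2))) (w - 3)
  = 2 * ( euler1 w 1 - euler1 w (-1)
        + euler2 v 1 (-1) (-1) + euler2 1 v (-1) (-1)
        - euler2 v 1 (-1) 1 - euler2 1 v (-1) 1 ).
Proof.
  intros v. subst v.
  destruct (Nat.le_exists_sub 3 w hw) as [n [-> _]].
  replace (n + 3 - 1)%nat with (n + 2)%nat by lia.
  replace (n + 3 - 3)%nat with n by lia.
  assert (Hgap : is_lim_seq (fun N => T2_sum_partial n N - euler_comb_partial n N) (-4 * 0)).
  { apply (is_lim_seq_ext (fun N =>
      -4 * (odd_square (n + 2) (S N) - odd_triangle (n + 2) (S N)))).
    - intros N. rewrite partial_sums_identity. ring.
    - apply is_lim_seq_mult'; [apply is_lim_seq_const | apply odd_square_gap_cvg0; lia]. }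
  pose proof (is_lim_seq_minus' _ _ _ _ (T2_sum_partial_cvg n) (euler_comb_partial_cvg n)) as Hlim.
  apply is_lim_seq_unique in Hlim, Hgap.
  rewrite Hgap in Hlim. injection Hlim. lra.
Qed.
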